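(* For every $n,k\ge1$ and $p\in[0,1]$, there is a randomized selection algorithm in the rank query model that runs in $k$ rounds, succeeds with probability $p$ on every input of length $n$, and issues an expected number of queries at most $np\frac{k+1}{2k}+1$ on every input.
   Context: Selection with rank queries: there is a vector $\vec{x}=(x_1,\ldots,x_n)$ whose ranks form an unknown permutation of $\{1,\ldots,n\}$; a rank $r$ is given and the goal is to output the index $i$ with $\mathrm{rank}(x_i)=r$. Queries have the form ''How is $\mathrm{rank}(x_j)$ compared to $m$?'', with answer ''$<$'', ''$=$'' or ''$>$''. An algorithm runs in $k$ rounds if in each of $k$ rounds it submits a set of queries chosen depending only on answers of earlier rounds (and its randomness), then receives all answers. A randomized algorithm is a distribution over deterministic algorithms; probabilities and expectations are over its randomness. *)

From HB Require Import structures.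
From mathcomp Require Import all_boot all_order all_algebra all_fingroup.
From mathcomp Require Import reals.
Set Implicit Arguments. Unset Strict Implicit. Unset Printing Implicit Defensive.
Import Order.TTheory GRing.Theory Num.Theory.
Local Open Scope ring_scope.

(* Rank query model.
   The input vector x = (x_1..x_n) is described by its rank permutation:
   s : 'S_n, and rank(x_i) = (s i).+1 in {1,..,n} (indices are 'I_n). *)

Definition rank_of (n : nat) (s : 'S_n) (i : 'I_n) : nat := (s i).+1.

Inductive answer := ALt | AEq | AGt.

Definition query (n : nat) := ('I_n * nat)%type.

Definition answer_query (n : nat) (s : 'S_n) (q : query n) : answer :=
  let v := rank_of s q.1 in
  if (v < q.2)%N then ALt else if v == q.2 then AEq else AGt.

Definition history (n : nat) := seq (query n * answer)%type.

(* A deterministic algorithm: given the target rank r, the set (list) of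
   queries submitted in round t depends only on t and on the answers of
   earlier rounds (the history); after the last round it outputs an index,
   or None (failure). *)
Record detalg (n : nat) := DetAlg {
  da_round : nat -> nat -> history n -> seq (query n);   (* r -> t -> hist *)
  da_output : nat -> history n -> option 'I_n
}.

Fixpoint run_hist (n : nat) (A : detalg n) (s : 'S_n) (r t : nat) : history n :=
  match t with
  | 0 => [::]
  | t'.+1 =>
      let h := run_hist A s r t' in
      h ++ [seq (q, answer_query s q) | q <- da_round A r t' h]
  end.

Definition num_queries (n : nat) (A : detalg n) (k : nat) (s : 'S_n) (r : nat)
  : nat := size (run_hist A s r k).

Definition succeeds (n : nat) (A : detalg n) (k : nat) (s : 'S_n) (r : nat)
  : bool :=
  if da_output A r (run_hist A s r k) is Some i then rank_of s i == r
  else false.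

(* A randomized algorithm: a (finitely supported) probability distribution
   over deterministic algorithms, given as a list of (weight, algorithm). *)
Definition rand_alg (R : realType) (n : nat) := seq (R * detalg n)%type.

Definition is_distribution (R : realType) (n : nat) (D : rand_alg R n) : Prop :=
  (forall a, a \in map fst D -> 0 <= a) /\ \sum_(a <- D) a.1 = 1.

Definition success_prob (R : realType) (n : nat) (D : rand_alg R n)
  (k : nat) (s : 'S_n) (r : nat) : R :=
  \sum_(a <- D) a.1 * (succeeds a.2 k s r)%:R.

Definition expected_queries (R : realType) (n : nat) (D : rand_alg R n)
  (k : nat) (s : 'S_n) (r : nat) : R :=
  \sum_(a <- D) a.1 * (num_queries a.2 k s r)%:R.

From mathcomp Require Import all_boot all_order all_algebra all_fingroup.
From mathcomp Require Import reals.
From mathcomp Require Import zify.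
Set Implicit Arguments. Unset Strict Implicit. Unset Printing Implicit Defensive.
Import Order.TTheory GRing.Theory Num.Theory.

(* Split the indices, cyclically shifted by some c, into k consecutive blocks
   of size b = ceil(n/k), and in round t ask "rank(x_j) vs r" for every j of
   block t, stopping after the first "=".  This always succeeds, and costs the
   number of indices lying in blocks up to that of the target.  Run it with a
   uniformly random shift with probability p, and otherwise give up without
   asking anything.  Summing over all shifts amounts to letting the target
   range over all positions, so the total cost counts the ordered pairs of
   positions whose blocks are weakly ordered; by symmetry there are at most
   (n^2 + n b)/2 of them, and the expected number of queries
   is at most p (n + b)/2 <= n p (k+1)/(2k) + 1. *)

Definition is_hit (n : nat) (qa : query n * answer) : bool :=
  if qa.2 is AEq then true else false.

Definition hits (n : nat) (h : history n) : seq 'I_n :=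
  [seq qa.1.1 | qa <- h & is_hit qa].

Definition sched_search (n : nat) (g : 'I_n -> nat) : detalg n :=
  DetAlg (fun r t h => if hits h is [::]
                       then [seq (j, r) | j <- enum 'I_n & g j == t] else [::])
         (fun _ h => ohead (hits h)).

Lemma hits_cat (n : nat) (h1 h2 : history n) : hits (h1 ++ h2) = hits h1 ++ hits h2.
Proof. by rewrite /hits filter_cat map_cat. Qed.

Lemma count_enum_card (T : finType) (P : pred T) : count P (enum T) = #|P|.
Proof. by rewrite enumT cardE /enum_mem size_filter. Qed.

Section ScheduledSearch.

Variables (n : nat) (g : 'I_n -> nat) (s : 'S_n) (i : 'I_n).

Lemma is_hit_answer (j : 'I_n) :
  is_hit ((j, rank_of s i), answer_query s (j, rank_of s i)) = (j == i).
Proof.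
rewrite /is_hit /answer_query /=.
have rank_inj : (rank_of s j == rank_of s i) = (j == i).
  by rewrite /rank_of eqSS (inj_eq val_inj) (inj_eq perm_inj).
by rewrite -rank_inj; case: ltngtP.
Qed.

Lemma hits_round (t : nat) :
  hits [seq (q, answer_query s q)
          | q <- [seq (j, rank_of s i) | j <- enum 'I_n & g j == t]]
  = if g i == t then [:: i] else [::].
Proof.
rewrite /hits -!map_comp filter_map /= (eq_filter (a2 := pred1 i)); last first.
  by move=> j /=; rewrite is_hit_answer.
rewrite -filter_predI -map_comp (eq_map (g := id)) // map_id.
case: eqP => [git | gi_t].
  rewrite (eq_filter (a2 := pred1 i)) ?filter_pred1_uniq ?enum_uniq ?mem_enum //.
  by move=> j /=; case: eqP => // ->; rewrite git eqxx.
rewrite (eq_filter (a2 := pred0)) ?filter_pred0 //.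
by move=> j /=; case: eqP => // ->; case: eqP.
Qed.

Lemma sched_search_hist (t : nat) :
  let h := run_hist (sched_search g) s (rank_of s i) t in
  hits h = (if g i < t then [:: i] else [::]) /\
  size h = #|[pred j | (g j < t) && (g j <= g i)]|.
Proof.
elim: t => [|t]; first by split; rewrite //= eq_card0.
set h := run_hist _ _ _ t => /= -[hits_h size_h].
case: (ltnP (g i) t) => [git | tgi].
  rewrite hits_h git cats0 hits_h size_h git ltnS (ltnW git); split=> //.
  by apply: eq_card => j; rewrite !inE; apply/idP/idP; lia.
have gi_t : (g i < t) = false by rewrite ltnNge tgi.
rewrite hits_h gi_t hits_cat hits_h gi_t hits_round size_cat !size_map size_filter.
rewrite count_enum_card size_h -cardUI (@eq_card0 _ [predI _ & _]) ?addn0.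
- split; first by congr (if _ then _ else _); lia.
  by apply: eq_card => j; rewrite !inE; apply/idP/idP; lia.
- by move=> j; rewrite !inE; apply/idP; lia.
Qed.

Variable k : nat.
Hypothesis g_lt_k : forall j, g j < k.

Lemma sched_search_succeeds : succeeds (sched_search g) k s (rank_of s i).
Proof.
by rewrite /succeeds /=; case: (sched_search_hist k) => -> _; rewrite g_lt_k /=.
Qed.

Lemma num_queries_sched_search :
  num_queries (sched_search g) k s (rank_of s i) = #|[pred j | g j <= g i]|.
Proof.
rewrite /num_queries; case: (sched_search_hist k) => _ ->.
by apply: eq_card => j; rewrite !inE g_lt_k.
Qed.

End ScheduledSearch.

Lemma rank_of_onto (n : nat) (s : 'S_n) (r : nat) :
  0 < r <= n -> exists i, rank_of s i = r.
Proof.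
case/andP=> r_gt0 r_le_n; have r_lt : r.-1 < n by rewrite prednK.
by exists ((s^-1)%g (Ordinal r_lt)); rewrite /rank_of permKV prednK.
Qed.

Lemma card_sum_indicator (T : finType) (P : pred T) : #|P| = \sum_x (P x : nat).
Proof.
by rewrite -sum1_card big_mkcond; apply: eq_bigr => x _; rewrite unfold_in; case: (P x).
Qed.

Lemma sum_card_le_mul2 (T : finType) (f : T -> nat) :
  (\sum_x #|[pred y | f y <= f x]|) * 2
  = #|T| * #|T| + \sum_x #|[pred y | f y == f x]|.
Proof.
under eq_bigr do rewrite card_sum_indicator.
rewrite muln2 -addnn {2}exchange_big -big_split -sum_nat_const.
rewrite -big_split; apply: eq_bigr => x _ /=.
rewrite !card_sum_indicator -!big_split /=.
by apply: eq_bigr => y _; case: ltngtP.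
Qed.

Lemma sum_card_le_mul2_leq (T : finType) (f : T -> nat) (b : nat) :
  (forall x, #|[pred y | f y == f x]| <= b) ->
  (\sum_x #|[pred y | f y <= f x]|) * 2 <= #|T| * (#|T| + b).
Proof.
move=> fiber_le_b; rewrite sum_card_le_mul2 mulnDr leq_add2l -sum_nat_const.
exact: leq_sum.
Qed.

Lemma card_divn_fiber (m b q : nat) : 0 < b -> #|[pred j : 'I_m | j %/ b == q]| <= b.
Proof.
move=> b_gt0; rewrite -[X in _ <= X]card_ord.
apply: (@leq_card_in _ _ (fun j : 'I_m => Ordinal (ltn_pmod j b_gt0))).
move=> x y; rewrite !inE => /eqP x_q /eqP y_q [] xy_mod.
by apply: val_inj; rewrite /= (divn_eq x b) (divn_eq y b) x_q y_q xy_mod.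
Qed.

Lemma sum_card_shift (V : finZmodType) (f : V -> nat) (i : V) :
  \sum_c #|[pred j | f (j + c)%R <= f (i + c)%R]| = \sum_c #|[pred j | f j <= f c]|.
Proof.
rewrite [RHS](reindex_inj (addrI i)); apply: eq_bigr => c _.
by rewrite !card_sum_indicator [RHS](reindex_inj (addIr c)).
Qed.

Lemma divn_ceil_bounds (m k : nat) : 0 < k -> m <= (m + k.-1) %/ k * k < m + k.
Proof.
by move=> k_gt0; have := divn_eq (m + k.-1) k; have := ltn_pmod (m + k.-1) k_gt0; lia.
Qed.

(* [j + c] is addition in Z/(n+1): the shift c acts cyclically. *)
Definition shift_sched (n b : nat) (c j : 'I_n.+1) : nat := (j + c)%R %/ b.

Lemma shift_sched_lt (n b k : nat) (c j : 'I_n.+1) :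
  n.+1 <= b * k -> shift_sched b c j < k.
Proof.
move=> n_le_bk; have b_gt0 : 0 < b by case: b n_le_bk.
by rewrite /shift_sched ltn_divLR // mulnC (leq_trans _ n_le_bk).
Qed.

Lemma sum_card_shift_sched (n b : nat) (i : 'I_n.+1) : 0 < b ->
  (\sum_c #|[pred j | shift_sched b c j <= shift_sched b c i]|) * 2
  <= n.+1 * (n.+1 + b).
Proof.
move=> b_gt0; rewrite (sum_card_shift (fun j : 'I_n.+1 => j %/ b)).
have := @sum_card_le_mul2_leq _ (fun j : 'I_n.+1 => j %/ b) b.
by rewrite card_ord; apply=> c; apply: card_divn_fiber.
Qed.

Local Open Scope ring_scope.

Definition fail_alg (n : nat) : detalg n :=
  DetAlg (fun _ _ _ => [::]) (fun _ _ => None).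

Lemma run_hist_fail_alg (n : nat) (s : 'S_n) (r t : nat) :
  run_hist (fail_alg n) s r t = [::].
Proof. by elim: t => //= t ->. Qed.

Section MixWithFailure.

Variables (R : realType) (n : nat) (p : R) (As : seq (detalg n)).

Definition mix_with_fail : rand_alg R n :=
  (1 - p, fail_alg n) :: [seq (p / (size As)%:R, A) | A <- As].

Lemma mix_with_fail_distribution :
  0 <= p <= 1 -> (0 < size As)%N -> is_distribution mix_with_fail.
Proof.
move=> /andP[p_ge0 p_le1] As_gt0; have size_neq0 : (size As)%:R != 0 :> R.
  by rewrite pnatr_eq0 -lt0n.
split.
  apply/allP; rewrite /mix_with_fail map_cons -map_comp /= subr_ge0 p_le1.
  rewrite all_map andTb.
  by rewrite (eq_all (a2 := predT)) ?all_predT // => A /=; rewrite divr_ge0.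
rewrite big_cons big_map big_const_seq count_predT iter_addr_0 /=.
by rewrite -[X in _ + X]mulr_natr divfK // subrK.
Qed.

Variables (k : nat) (s : 'S_n) (r : nat).

Lemma success_prob_mix_with_fail :
  success_prob mix_with_fail k s r
  = p / (size As)%:R * \sum_(A <- As) (succeeds A k s r)%:R.
Proof.
by rewrite /success_prob big_cons big_map mulr_sumr /= mulr0 add0r.
Qed.

Lemma expected_queries_mix_with_fail :
  expected_queries mix_with_fail k s r
  = p / (size As)%:R * \sum_(A <- As) (num_queries A k s r)%:R.
Proof.
rewrite /expected_queries big_cons big_map mulr_sumr /=.
by rewrite /num_queries run_hist_fail_alg mulr0 add0r.
Qed.

End MixWithFailure.

Lemma avg_cost_bound (R : realType) (n k b S : nat) (p : R) :
  (0 < n)%N -> (0 < k)%N -> (b * k < n + k)%N -> (S * 2 <= n * (n + b))%N ->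
  0 <= p <= 1 ->
  p / n%:R * S%:R <= n%:R * p * ((k.+1)%:R / (2 * k)%:R) + 1.
Proof.
move=> n_gt0 k_gt0 bk_lt S_le /andP[p_ge0 p_le1].
have S_le_nat : (S * (2 * k) <= n * (n * k.+1 + 2 * k))%N by nia.
have k2_gt0 : 0 < (2 * k)%:R :> R by rewrite ltr0n muln_gt0.
have S_avg : S%:R / n%:R <= n%:R * ((k.+1)%:R / (2 * k)%:R) + 1 :> R.
  have -> : n%:R * ((k.+1)%:R / (2 * k)%:R) + 1
            = (n * k.+1 + 2 * k)%:R / (2 * k)%:R :> R.
    by rewrite (natrD R (n * k.+1)) (natrM R n) mulrDl mulrA divff // lt0r_neq0.
  rewrite ler_pdivlMr // mulrAC ler_pdivrMr ?ltr0n // -!natrM ler_nat.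
  by rewrite [((_ + _) * n)%N]mulnC.
rewrite mulrAC -mulrA [_ * p]mulrC -mulrA.
apply: (le_trans (ler_wpM2l p_ge0 S_avg)).
by rewrite mulrDr mulr1 lerD2l.
Qed.

Theorem proposition12 (R : realType) (n k : nat) (p : R) :
  (1 <= n)%N -> (1 <= k)%N -> 0 <= p <= 1 ->
  exists D : rand_alg R n,
    is_distribution D /\
    forall (s : 'S_n) (r : nat), (1 <= r <= n)%N ->
      success_prob D k s r = p /\
      expected_queries D k s r
        <= n%:R * p * ((k.+1)%:R / (2 * k)%:R) + 1.
Proof.
case: n => [//|n] _ k_gt0 p01.
set b := ((n.+1 + k.-1) %/ k)%N.
have /andP[n_le_bk bk_lt] := divn_ceil_bounds n.+1 k_gt0.
have b_gt0 : (0 < b)%N by move: n_le_bk; rewrite -/b; case: b.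
set As := [seq sched_search (shift_sched b c) | c <- enum 'I_n.+1].
have size_As : size As = n.+1 by rewrite size_map size_enum_ord.
exists (mix_with_fail p As); split.
  by apply: mix_with_fail_distribution; rewrite ?size_As.
move=> s r /(rank_of_onto s)[i <-].
have shift_lt_k (c j : 'I_n.+1) : (shift_sched b c j < k)%N by exact: shift_sched_lt.
rewrite success_prob_mix_with_fail expected_queries_mix_with_fail size_As !big_map.
split.
  under eq_bigr do rewrite sched_search_succeeds //.
  by rewrite sumr_const card_ord /= mulr1n divfK ?pnatr_eq0.
under eq_bigr do rewrite num_queries_sched_search //.
rewrite -natr_sum; exact: avg_cost_bound (sum_card_shift_sched i b_gt0) p01.
Qed.
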